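(* Let $n\geq1$ and let $F$ be a joint distribution of nonnegative lifetimes $X_1,\ldots,X_n$ with no ties. The following are equivalent: (a) $I_{\mathrm{BP}}^{(j)}=b_j$ for every $j\in[n]$ and every coherent structure function $\phi\in\Phi_n$; (b) the same for every semicoherent $\phi\in\Phi'_n$; (c) $q_j(A)=\frac{1}{n\binom{n-1}{|A|}}$ for every $j\in[n]$ and every $A\subseteq[n]\setminus\{j\}$.
   Context: Subsets of $[n]$ are identified with Boolean vectors. $\Phi'_n$ is the set of semicoherent structure functions $\phi:2^{[n]}\to\{0,1\}$: nondecreasing with $\phi(\varnothing)=0$, $\phi([n])=1$. $\Phi_n\subseteq\Phi'_n$ is the set of coherent ones: every variable is essential, i.e., for each $j$ there is $\mathbf{x}$ with $\phi(\mathbf{x})|_{x_j=0}\neq\phi(\mathbf{x})|_{x_j=1}$. No ties: $\Pr(X_i=X_k)=0$ for $i\neq k$. System lifetime $T=\inf\{t\geq0:\phi(\{i:X_i>t\})=0\}$; $I_{\mathrm{BP}}^{(j)}=\Pr(T=X_j)$ (depending on $\phi$ and $F$). $b_j=\sum_{A\subseteq[n]\setminus\{j\}}\frac{1}{n\binom{n-1}{|A|}}(\phi(A\cup\{j\})-\phi(A))$. $q_j(A)=\Pr\big(\max_{i\notin A\cup\{j\}}X_i<X_j<\min_{i\in A}X_i\big)$ (empty max $=-\infty$, empty min $=+\infty$). *)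

From mathcomp Require Import all_boot.
From Stdlib Require Import Reals.
Set Implicit Arguments. Unset Strict Implicit. Unset Printing Implicit Defensive.

Local Open Scope R_scope.

Record ProbSpace := {
  ps_carrier :> Type;
  ps_meas : (ps_carrier -> Prop) -> Prop;
  ps_P : (ps_carrier -> Prop) -> R;
  ps_meas_full : ps_meas (fun _ => True);
  ps_meas_compl : forall A, ps_meas A -> ps_meas (fun w => ~ A w);
  ps_meas_cunion : forall A : nat -> ps_carrier -> Prop,
      (forall k, ps_meas (A k)) -> ps_meas (fun w => exists k, A k w);
  ps_P_nonneg : forall A, ps_meas A -> 0 <= ps_P A;
  ps_P_full : ps_P (fun _ => True) = 1;
  ps_P_cadd : forall A : nat -> ps_carrier -> Prop,
      (forall k, ps_meas (A k)) ->
      (forall k l, k <> l -> forall w, A k w -> A l w -> False) ->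
      infinite_sum (fun k => ps_P (A k)) (ps_P (fun w => exists k, A k w))
}.

Definition Rltb (a b : R) : bool := if Rlt_dec a b then true else false.

Definition nondecreasing_sf n (phi : {set 'I_n} -> bool) : Prop :=
  forall A B : {set 'I_n}, A \subset B -> (phi A ==> phi B).

Definition semicoherent n (phi : {set 'I_n} -> bool) : Prop :=
  nondecreasing_sf phi /\ phi set0 = false /\ phi setT = true.

Definition coherent n (phi : {set 'I_n} -> bool) : Prop :=
  semicoherent phi /\
  forall j : 'I_n, exists A : {set 'I_n}, phi (A :\ j) <> phi (j |: A).

Definition is_inf (S : R -> Prop) (s : R) : Prop :=
  (forall y, S y -> s <= y) /\ (forall z, (forall y, S y -> z <= y) -> z <= s).

Definition lifetime_is n (phi : {set 'I_n} -> bool) (x : 'I_n -> R) (s : R) : Prop :=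
  is_inf (fun t => 0 <= t /\ phi [set i | Rltb t (x i)] = false) s.

Definition I_BP (Om : ProbSpace) n (X : 'I_n -> Om -> R)
    (phi : {set 'I_n} -> bool) (j : 'I_n) : R :=
  @ps_P Om (fun w => lifetime_is phi (fun i => X i w) (X j w)).

Definition sweight n (A : {set 'I_n}) : R :=
  / (INR n * INR 'C(n.-1, #|A|)).

Definition shapley n (phi : {set 'I_n} -> bool) (j : 'I_n) : R :=
  \big[Rplus/0]_(A : {set 'I_n} | j \notin A)
     (sweight A * (INR (phi (j |: A)) - INR (phi A))).

Definition q_prob (Om : ProbSpace) n (X : 'I_n -> Om -> R)
    (j : 'I_n) (A : {set 'I_n}) : R :=
  @ps_P Om (fun w =>
    (forall i : 'I_n, i \notin A -> i <> j -> X i w < X j w) /\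
    (forall i : 'I_n, i \in A -> X j w < X i w)).

(* Both indices are "marginal sums": the Shapley value weights the marginal contribution
   phi(A + j) - phi(A) of j by 1 / (n * C(n-1,|A|)), and the Barlow-Proschan index weights
   it by q_j(A).  The second fact is proved first: up to the null event of ties, the system
   fails together with j exactly when the set of components outliving j is critical for j
   (lemma I_BP_crit_sum), and for monotone phi the marginal contribution is the indicator of
   criticality (marginal_sum_crit).  Then (c) => (b) is immediate, (b) => (a)
   is trivial, and for (a) => (c) the series system and the parallel connections of two
   series systems are coherent test systems whose marginal sums are the interval sums of the
   weights over [C, ~{j}]; these determine the weights by Moebius inversion
   (interval_sums_inj). *)

From HB Require Import structures.
From mathcomp Require Import all_boot.
From Stdlib Require Import Reals Lra FunctionalExtensionality PropExtensionality Classical.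
Set Implicit Arguments. Unset Strict Implicit. Unset Printing Implicit Defensive.
Local Open Scope R_scope.

Section Events.
Variable Om : ProbSpace.
Implicit Types (A B : Om -> Prop).

Lemma event_ext (T : Type) (E F : T -> Prop) : (forall w, E w <-> F w) -> E = F.
Proof.
move=> EF; apply: functional_extensionality => w.
exact: propositional_extensionality.
Qed.

Lemma meas_ext A B : ps_meas A -> (forall w, A w <-> B w) -> ps_meas B.
Proof. by move=> mA /event_ext <-. Qed.

Lemma P_ext A B : (forall w, A w <-> B w) -> ps_P A = ps_P B.
Proof. by move=> /event_ext ->. Qed.

Lemma meas_const (P : Prop) : @ps_meas Om (fun _ => P).
Proof.
have [p|np] := classic P.
  by apply: meas_ext (ps_meas_full Om) _.
by apply: meas_ext (ps_meas_compl (ps_meas_full Om)) _.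
Qed.

Lemma meas_union A B : ps_meas A -> ps_meas B -> ps_meas (fun w => A w \/ B w).
Proof.
move=> mA mB; pose S (k : nat) := if k is 0%N then A else B.
have mS : forall k, ps_meas (S k) by case.
apply: meas_ext (ps_meas_cunion mS) _ => w; split.
- by case=> [[|k]] /=; [left|right].
- by case=> ?; [exists O | exists 1%nat].
Qed.

Lemma meas_inter A B : ps_meas A -> ps_meas B -> ps_meas (fun w => A w /\ B w).
Proof.
move=> mA mB.
apply: meas_ext (ps_meas_compl (meas_union (ps_meas_compl mA) (ps_meas_compl mB))) _.
by move=> w; tauto.
Qed.

Lemma constant_series_sum (c : R) : 0 <= c -> infinite_sum (fun _ => c) c -> c = 0.
Proof.
move=> c_ge0 sum_c; apply: NNPP => c_neq0.
have c_gt0 : 0 < c by lra.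
have partial : forall N, sum_f_R0 (fun _ : nat => c) N = INR (S N) * c.
  elim=> [|N IH]; first by rewrite /=; lra.
  by rewrite [sum_f_R0 _ _]/= IH !S_INR; ring.
have [N HN] := sum_c c c_gt0.
have := HN (S N) (le_S _ _ (Nat.le_refl _)).
rewrite /R_dist partial !S_INR Rabs_right; have := pos_INR N; nra.
Qed.

Lemma P_empty : @ps_P Om (fun _ => False) = 0.
Proof.
have m0 : forall k : nat, @ps_meas Om (fun _ => False) by move=> _; exact: meas_const.
have := ps_P_cadd m0 (fun _ _ _ _ f _ => f).
rewrite (P_ext (B := fun _ => False)) => [|w]; last by split=> // [[]].
by apply: constant_series_sum; apply: ps_P_nonneg; exact: meas_const.
Qed.

Lemma P_add2 A B : ps_meas A -> ps_meas B -> (forall w, A w -> B w -> False) ->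
  ps_P (fun w => A w \/ B w) = ps_P A + ps_P B.
Proof.
move=> mA mB AB.
pose S (k : nat) := match k with O => A | 1%nat => B | _ => fun _ : Om => False end.
have mS : forall k, ps_meas (S k) by case=> [|[|k]] //; exact: meas_const.
have dS : forall k l, k <> l -> forall w, S k w -> S l w -> False.
  by move=> [|[|k]] [|[|l]] // _ w /=; firstorder.
have := ps_P_cadd mS dS.
rewrite (P_ext (B := fun w => A w \/ B w)) => [sumS|w]; last first.
  split; first by case=> [[|[|k]]] /=; tauto.
  by case=> ?; [exists O | exists 1%nat].
(* from the second term on, the partial sums are constant *)
apply: (uniqueness_sum _ _ _ sumS) => eps eps_gt0; exists 1%nat => N N_ge1.
have -> : sum_f_R0 (fun k => ps_P (S k)) N = ps_P A + ps_P B.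
  elim: N N_ge1 => [|[|N] IH] N_ge1 //; first by inversion N_ge1.
  by rewrite /= in IH *; rewrite IH ?P_empty; [ring | apply/le_n_S/le_0_n].
by rewrite /R_dist Rminus_diag Rabs_R0.
Qed.

Lemma P_diff A B : ps_meas A -> ps_meas B -> (forall w, A w -> B w) ->
  ps_P B = ps_P A + ps_P (fun w => B w /\ ~ A w).
Proof.
move=> mA mB AB; have mBA := meas_inter mB (ps_meas_compl mA).
rewrite -P_add2 //; last by move=> w ? [].
by apply: P_ext => w; have := AB w; have := classic (A w); tauto.
Qed.

Lemma P_mono A B : ps_meas A -> ps_meas B -> (forall w, A w -> B w) -> ps_P A <= ps_P B.
Proof.
move=> mA mB AB; rewrite (P_diff mA mB AB).
by have := ps_P_nonneg (meas_inter mB (ps_meas_compl mA)); lra.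
Qed.

Lemma P_union_le A B : ps_meas A -> ps_meas B -> ps_P (fun w => A w \/ B w) <= ps_P A + ps_P B.
Proof.
move=> mA mB; have mAB := meas_union mA mB.
rewrite (P_diff mA mAB) => [|w]; last by left.
suff : ps_P (fun w => (A w \/ B w) /\ ~ A w) <= ps_P B by lra.
by apply: P_mono; [exact: meas_inter mAB (ps_meas_compl mA) | | move=> w; tauto].
Qed.

Lemma P_eq_mod_null A B (Nul : Om -> Prop) :
  ps_meas A -> ps_meas B -> ps_meas Nul -> ps_P Nul = 0 ->
  (forall w, A w -> B w) -> (forall w, B w -> A w \/ Nul w) -> ps_P A = ps_P B.
Proof.
move=> mA mB mNul PNul0 AB BAN; rewrite (P_diff mA mB AB).
have mBA := meas_inter mB (ps_meas_compl mA).
suff : ps_P (fun w => B w /\ ~ A w) <= ps_P Nul by have := ps_P_nonneg mBA; lra.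
by apply: P_mono => // w [/BAN]; tauto.
Qed.

Lemma exists_in_cons (I : eqType) (a : I) (s : seq I) (E : I -> Prop) :
  (exists i, i \in a :: s /\ E i) <-> E a \/ exists i, i \in s /\ E i.
Proof.
split; first by case=> i [/predU1P [-> | si] Ei]; [left | right; exists i].
by case=> [Ea|[i [si Ei]]]; [exists a | exists i]; rewrite in_cons ?eqxx ?si ?orbT.
Qed.

Lemma exists_in_nil (I : eqType) (E : I -> Prop) : (exists i, i \in [::] /\ E i) <-> False.
Proof. by split=> // [[i []]]. Qed.

Lemma meas_exists_seq (I : eqType) (s : seq I) (E : I -> Om -> Prop) :
  (forall i, ps_meas (E i)) -> ps_meas (fun w => exists i, i \in s /\ E i w).
Proof.
move=> mE; elim: s => [|a s IH].
  by apply: meas_ext (meas_const False) _ => w; rewrite exists_in_nil.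
by apply: meas_ext (meas_union (mE a) IH) _ => w; rewrite exists_in_cons.
Qed.

Lemma exists_in_index_enum (I : finType) (E : I -> Prop) :
  (exists i, i \in index_enum I /\ E i) <-> exists i, E i.
Proof. by split=> [[i []]|[i Ei]]; exists i; rewrite ?mem_index_enum. Qed.

Lemma meas_exists_fin (I : finType) (E : I -> Om -> Prop) :
  (forall i, ps_meas (E i)) -> ps_meas (fun w => exists i, E i w).
Proof.
move=> mE; apply: meas_ext (meas_exists_seq (index_enum I) mE) _ => w.
exact: exists_in_index_enum.
Qed.

Lemma meas_forall_fin (I : finType) (E : I -> Om -> Prop) :
  (forall i, ps_meas (E i)) -> ps_meas (fun w => forall i, E i w).
Proof.
move=> mE; apply: meas_ext (ps_meas_compl (meas_exists_fin (fun i => ps_meas_compl (mE i)))) _.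
by move=> w; split=> [nE i | Ew [i nEi]]; [apply: NNPP => nEi; apply: nE; exists i | exact: nEi].
Qed.

Lemma P_exists_seq (I : eqType) (s : seq I) (E : I -> Om -> Prop) : uniq s ->
  (forall i, ps_meas (E i)) -> (forall i k w, i <> k -> E i w -> E k w -> False) ->
  ps_P (fun w => exists i, i \in s /\ E i w) = \big[Rplus/0]_(i <- s) ps_P (E i).
Proof.
move=> + mE dE; elim: s => [_|a s IH /andP [a_s uniq_s]].
  by rewrite big_nil -P_empty; apply: P_ext => w; rewrite exists_in_nil.
rewrite big_cons -IH // -P_add2 //; last 2 first.
- exact: meas_exists_seq.
- by move=> w Ea [i [si Ei]]; apply: (dE a i w) => // ai; rewrite ai si in a_s.
by apply: P_ext => w; rewrite exists_in_cons.
Qed.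

Lemma P_exists_fin (I : finType) (D : pred I) (E : I -> Om -> Prop) :
  (forall i, ps_meas (E i)) -> (forall i k w, i <> k -> E i w -> E k w -> False) ->
  ps_P (fun w => exists i, D i /\ E i w) = \big[Rplus/0]_(i | D i) ps_P (E i).
Proof.
move=> mE dE; rewrite -big_filter -P_exists_seq //; last first.
  by rewrite filter_uniq // index_enum_uniq.
apply: P_ext => w; split=> [] [i [Di Ei]]; exists i;
  by move: Di; rewrite ?mem_filter mem_index_enum andbT.
Qed.

Lemma P_exists_fin_null (I : finType) (E : I -> Om -> Prop) :
  (forall i, ps_meas (E i)) -> (forall i, ps_P (E i) = 0) -> ps_P (fun w => exists i, E i w) = 0.
Proof.
move=> mE PE0.
suff seq_null : forall s : seq I, ps_P (fun w => exists i, i \in s /\ E i w) = 0.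
  by rewrite -(seq_null (index_enum I)); apply: P_ext => w; rewrite exists_in_index_enum.
elim=> [|a s IH]; first by rewrite -P_empty; apply: P_ext => w; rewrite exists_in_nil.
apply: Rle_antisym; last exact/ps_P_nonneg/meas_exists_seq.
rewrite -(Rplus_0_r 0) -{1}(PE0 a) -IH.
rewrite (P_ext (B := fun w => E a w \/ exists i, i \in s /\ E i w)) => [|w].
  exact/P_union_le/meas_exists_seq.
exact: exists_in_cons.
Qed.

End Events.

(* The rationals (k1 - k2) / k3, indexed by triples of naturals, are dense in R. *)
Definition ratq (k1 k2 k3 : nat) : R := (INR k1 - INR k2) / INR k3.

Lemma IZR_nat_diff (z : Z) : exists a b : nat, IZR z = INR a - INR b.
Proof.
case: z => [|p|p]; [exists O, O | exists (Pos.to_nat p), O | exists O, (Pos.to_nat p)];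
  by rewrite ?IZR_NEG /= ?INR_IPR; cbv [IZR]; lra.
Qed.

Lemma ratq_dense (x y : R) : x < y -> exists k1 k2 k3, x < ratq k1 k2 k3 < y.
Proof.
move=> xy; have [N [invN N_gt0]] := archimed_cor1 (y - x) ltac:(lra).
have N_pos : 0 < INR N by apply: lt_0_INR.
have NinvN := Rinv_r (INR N) ltac:(lra).
have [up_gt up_le] := archimed (x * INR N).
have [k1 [k2 E]] := IZR_nat_diff (up (x * INR N)).
exists k1, k2, N; rewrite /ratq -E.
split; apply: (Rmult_lt_reg_r (INR N)) => //; rewrite /Rdiv Rmult_assoc Rinv_l; nra.
Qed.

Lemma meas_lt (Om : ProbSpace) (f g : Om -> R) :
  (forall t, ps_meas (fun w => f w <= t)) -> (forall t, ps_meas (fun w => g w <= t)) ->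
  ps_meas (fun w => f w < g w).
Proof.
move=> mf mg.
have mU : ps_meas (fun w => exists k1 k2 k3, f w <= ratq k1 k2 k3 /\ ~ g w <= ratq k1 k2 k3).
  by do 3 (apply: ps_meas_cunion => ?); apply: meas_inter; [exact: mf | exact: ps_meas_compl].
apply: meas_ext mU _ => w; split; first by case=> [k1 [k2 [k3]]]; lra.
by move=> /ratq_dense [k1 [k2 [k3 ?]]]; exists k1, k2, k3; lra.
Qed.

Lemma RltbP (a b : R) : reflect (a < b) (Rltb a b).
Proof. by rewrite /Rltb; case: Rlt_dec => ?; constructor. Qed.

Lemma gap_above (I : finType) (x : I -> R) (t : R) :
  exists m, t < m /\ forall i, t < x i -> m <= x i.
Proof.
suff [m [t_m xm]] : exists m, t < m /\ forall i, i \in index_enum I -> t < x i -> m <= x i.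
  by exists m; split=> // i; apply: xm; rewrite mem_index_enum.
elim: (index_enum I) => [|a s [m [t_m xm]]]; first by exists (t + 1); split=> //; lra.
have [t_xa | xa_t] := Rlt_le_dec t (x a).
- exists (Rmin m (x a)); split; first exact: Rmin_glb_lt.
  move=> i /predU1P [-> _ | si t_xi]; first exact: Rmin_r.
  exact: Rle_trans (Rmin_l _ _) (xm i si t_xi).
- exists m; split=> // i /predU1P [-> | si]; [lra | exact: xm].
Qed.

Lemma gap_below (I : finType) (x : I -> R) (t : R) :
  exists m, m < t /\ forall i, x i < t -> x i <= m.
Proof.
have [m [t_m xm]] := gap_above (fun i => - x i) (- t).
by exists (- m); split=> [|i xi_t]; [lra | have := xm i ltac:(lra); lra].
Qed.

Definition upper n (x : 'I_n -> R) (j : 'I_n) : {set 'I_n} := [set i | Rltb (x j) (x i)].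
Definition weak_upper n (x : 'I_n -> R) (j : 'I_n) : {set 'I_n} := [set i | ~~ Rltb (x i) (x j)].

Lemma lifetime_char n (phi : {set 'I_n} -> bool) (x : 'I_n -> R) (j : 'I_n) :
  semicoherent phi -> (forall i, 0 <= x i) ->
  lifetime_is phi x (x j) <-> phi (weak_upper x j) && ~~ phi (upper x j).
Proof.
move=> [mono [_ phiT]] x_ge0.
have phi_mono (A B : {set 'I_n}) : A \subset B -> phi A -> phi B by move/mono/implyP.
split.
- case=> lower greatest; apply/andP; split.
  + case phi_weak: (phi (weak_upper x j)) => //; exfalso.
    have [xj0 | xj_neq0] := Req_dec (x j) 0.
      suff weakT : weak_upper x j = setT by rewrite weakT phiT in phi_weak.
      by apply/setP => i; rewrite !inE; apply/RltbP; have := x_ge0 i; lra.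
    have [m [m_xj xm]] := gap_below x (x j).
    pose y := (Rmax m 0 + x j) / 2.
    have y_bounds : 0 <= y < x j.
      have xj_gt0 : 0 < x j by have := x_ge0 j; lra.
      by have := Rmax_r m 0; have := Rmax_lub_lt _ _ _ m_xj xj_gt0; rewrite /y; lra.
    suff : phi [set i | Rltb y (x i)] = false by move/(conj (proj1 y_bounds))/lower; lra.
    apply/negP => phi_y; move: phi_weak; rewrite (phi_mono _ _ _ phi_y) //.
    apply/subsetP => i; rewrite !inE => /RltbP y_xi; apply/RltbP => xi_xj.
    by have := xm i xi_xj; have := Rmax_l m 0; rewrite /y in y_xi; lra.
  + apply/negP => phi_up.
    have [m [xj_m xm]] := gap_above x (x j).
    suff : m <= x j by lra.
    apply: greatest => y [y_ge0 failed_y]; have := lower y (conj y_ge0 failed_y).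
    move=> xj_y; apply: Rnot_lt_le => y_m.
    move: failed_y; rewrite (phi_mono _ _ _ phi_up) //.
    by apply/subsetP => i; rewrite !inE => /RltbP /xm ?; apply/RltbP; lra.
- case/andP => phi_weak phi_up; split.
  + move=> y [_ failed_y]; apply: Rnot_lt_le => y_xj.
    move: failed_y; rewrite (phi_mono _ _ _ phi_weak) //.
    by apply/subsetP => i; rewrite !inE => /RltbP ?; apply/RltbP; lra.
  + by move=> z; apply; split; [exact: x_ge0 | exact: negbTE].
Qed.

Definition q_pattern n (x : 'I_n -> R) (j : 'I_n) (A : {set 'I_n}) : Prop :=
  (forall i, i \notin A -> i <> j -> x i < x j) /\ (forall i, i \in A -> x j < x i).

Definition crit n (phi : {set 'I_n} -> bool) (j : 'I_n) (A : {set 'I_n}) : bool :=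
  [&& j \notin A, phi (j |: A) & ~~ phi A].

Lemma q_pattern_levels n (x : 'I_n -> R) (j : 'I_n) (A : {set 'I_n}) : q_pattern x j A ->
  [/\ j \notin A, weak_upper x j = j |: A & upper x j = A].
Proof.
move=> [below above]; have jA : j \notin A by apply/negP => /above; lra.
split=> //; apply/setP => i; rewrite !inE.
- have [-> | ij] := eqVneq i j; first by apply/negP => /RltbP; lra.
  case: (boolP (i \in A)) => [/above | /below /(_ (elimN eqP ij))] ?.
    by apply/negP => /RltbP; lra.
  by apply/negbTE/negPn/RltbP.
- case: (boolP (i \in A)) => [/above | iA]; first by move/RltbP.
  have [-> | ij] := eqVneq i j; first by apply/RltbP; lra.
  by apply/RltbP; have := below i iA (elimN eqP ij); lra.
Qed.

Lemma q_pattern_upper n (x : 'I_n -> R) (j : 'I_n) :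
  (forall i, i <> j -> x i <> x j) -> q_pattern x j (upper x j).
Proof.
move=> no_tie; split=> i; rewrite inE => /RltbP // xj_xi ij.
by have := no_tie i ij; lra.
Qed.

Lemma lifetime_q_pattern n (phi : {set 'I_n} -> bool) (x : 'I_n -> R) (j : 'I_n)
  (A : {set 'I_n}) : semicoherent phi -> (forall i, 0 <= x i) -> q_pattern x j A ->
  lifetime_is phi x (x j) <-> crit phi j A.
Proof.
move=> phi_sc x_ge0 /q_pattern_levels [jA weakE upE].
by rewrite lifetime_char // weakE upE /crit jA.
Qed.

Definition order_pattern n (x : 'I_n -> R) : {ffun 'I_n * 'I_n -> bool} :=
  [ffun p => Rltb (x p.1) (x p.2)].

Section RandomLifetimes.
Variables (Om : ProbSpace) (n : nat) (X : 'I_n -> Om -> R).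
Hypothesis X_meas : forall (i : 'I_n) (t : R), ps_meas (fun w => X i w <= t).

Lemma meas_pattern (F : {ffun 'I_n * 'I_n -> bool} -> bool) :
  ps_meas (fun w => F (order_pattern (X^~ w))).
Proof.
have m_entry (g : {ffun 'I_n * 'I_n -> bool}) (p : 'I_n * 'I_n) :
    ps_meas (fun w => Rltb (X p.1 w) (X p.2 w) = g p).
  have m_lt := meas_lt (X_meas p.1) (X_meas p.2).
  case: (g p); [apply: meas_ext m_lt _ | apply: meas_ext (ps_meas_compl m_lt) _] => w.
    by split=> /RltbP.
  by split=> [?|/negbT/RltbP //]; apply/RltbP.
have m_F g := meas_inter (meas_const Om (F g)) (meas_forall_fin (m_entry g)).
apply: meas_ext (meas_exists_fin m_F) _ => w; split.
- by case=> g [Fg gw]; suff -> : order_pattern (X^~ w) = g by []; apply/ffunP => p; rewrite ffunE.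
- by move=> Fw; exists (order_pattern (X^~ w)); split=> // p; rewrite ffunE.
Qed.

Lemma meas_q_pattern (j : 'I_n) (A : {set 'I_n}) : ps_meas (fun w => q_pattern (X^~ w) j A).
Proof.
apply: meas_ext (meas_pattern (fun g => [forall i, (i \notin A) && (i != j) ==> g (i, j)]
                                      && [forall i, (i \in A) ==> g (j, i)])) _ => w.
split.
- case/andP => /forallP below /forallP above; split=> i.
  + by move=> iA /eqP ij; have := below i; rewrite iA ij ffunE => /RltbP.
  + by move=> iA; have := above i; rewrite iA ffunE => /RltbP.
- case=> below above; apply/andP; split; apply/forallP => i; apply/implyP; rewrite ffunE.
  + by case/andP => iA /eqP ij; apply/RltbP; exact: below.
  + by move=> iA; apply/RltbP; exact: above.
Qed.

Lemma meas_lifetime (phi : {set 'I_n} -> bool) (j : 'I_n) :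
  semicoherent phi -> (forall i w, 0 <= X i w) ->
  ps_meas (fun w => lifetime_is phi (X^~ w) (X j w)).
Proof.
move=> phi_sc X_ge0.
apply: meas_ext (meas_pattern (fun g => phi [set i | ~~ g (i, j)] && ~~ phi [set i | g (j, i)])) _.
move=> w; rewrite lifetime_char //.
suff [-> ->] : [set i | ~~ order_pattern (X^~ w) (i, j)] = weak_upper (X^~ w) j /\
               [set i | order_pattern (X^~ w) (j, i)] = upper (X^~ w) j by [].
by split; apply/setP => i; rewrite !inE ffunE.
Qed.

Definition tie_at (p : 'I_n * 'I_n) (w : Om) : Prop := p.1 <> p.2 /\ X p.1 w = X p.2 w.

Lemma meas_tie_at (p : 'I_n * 'I_n) : ps_meas (tie_at p).
Proof.
apply: meas_inter; first exact: meas_const.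
have m_neq := meas_union (meas_lt (X_meas p.1) (X_meas p.2)) (meas_lt (X_meas p.2) (X_meas p.1)).
by apply: meas_ext (ps_meas_compl m_neq) _ => w; split=> [|->]; lra.
Qed.

Lemma P_tie (no_ties : forall i k : 'I_n, i <> k -> ps_P (fun w => X i w = X k w) = 0) :
  ps_P (fun w => exists p, tie_at p w) = 0.
Proof.
apply: P_exists_fin_null => [|[a b]]; first exact: meas_tie_at.
have [<- | ab] := eqVneq a b.
  by rewrite -(P_empty Om); apply: P_ext => w; rewrite /tie_at; tauto.
have ab' : a <> b by apply/eqP.
by rewrite -(no_ties a b ab'); apply: P_ext => w; rewrite /tie_at /=; tauto.
Qed.

(* The Barlow-Proschan index of j sums q_j(A) over the sets A critical for j: up to ties,
   the system fails with j exactly when the components outliving j form a critical set. *)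
Lemma I_BP_crit_sum (phi : {set 'I_n} -> bool) (j : 'I_n) :
  semicoherent phi -> (forall i w, 0 <= X i w) ->
  (forall i k : 'I_n, i <> k -> ps_P (fun w => X i w = X k w) = 0) ->
  I_BP X phi j = \big[Rplus/0]_(A | crit phi j A) q_prob X j A.
Proof.
move=> phi_sc X_ge0 no_ties.
pose crit_event w := exists A, crit phi j A /\ q_pattern (X^~ w) j A.
have m_crit : ps_meas crit_event.
  by apply: meas_exists_fin => A; exact: meas_inter (meas_const Om _) (meas_q_pattern j A).
have -> : I_BP X phi j = ps_P crit_event.
  symmetry; apply: (P_eq_mod_null m_crit (meas_lifetime j phi_sc X_ge0)
                                  (meas_exists_fin meas_tie_at) (P_tie no_ties)).
  - by move=> w [A [critA patA]]; apply/(lifetime_q_pattern _ _ patA).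
  - move=> w lifetime_w; have [|no_tie] := classic (exists p, tie_at p w); first by right.
    have pat : q_pattern (X^~ w) j (upper (X^~ w) j).
      by apply: q_pattern_upper => i ij Xij; apply: no_tie; exists (i, j).
    by left; exists (upper (X^~ w) j); split=> //; apply/(lifetime_q_pattern _ _ pat).
rewrite /crit_event P_exists_fin //; first exact: meas_q_pattern.
move=> A B w AB /q_pattern_levels [_ _ upA] /q_pattern_levels [_ _ upB].
by apply: AB; rewrite -upA -upB.
Qed.

End RandomLifetimes.

HB.instance Definition _ :=
  Monoid.isComLaw.Build R 0 Rplus (fun x y z => esym (Rplus_assoc x y z)) Rplus_comm Rplus_0_l.

Lemma big_Rminus (I : Type) (r : seq I) (P : pred I) (F G : I -> R) :
  \big[Rplus/0]_(i <- r | P i) (F i - G i) =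
  \big[Rplus/0]_(i <- r | P i) F i - \big[Rplus/0]_(i <- r | P i) G i.
Proof.
rewrite /Rminus big_split /=; congr Rplus.
by apply: esym; apply: (big_morph Ropp); [move=> x y; ring | ring].
Qed.

(* Weighting the marginal contributions of j to phi by f: with f = sweight this is the
   Shapley value b_j, with f = q_j it is the Barlow-Proschan index. *)
Definition marginal_sum n (phi : {set 'I_n} -> bool) (j : 'I_n) (f : {set 'I_n} -> R) : R :=
  \big[Rplus/0]_(A : {set 'I_n} | j \notin A) (f A * (INR (phi (j |: A)) - INR (phi A))).

Lemma marginal_sum_crit n (phi : {set 'I_n} -> bool) (j : 'I_n) (f : {set 'I_n} -> R) :
  nondecreasing_sf phi -> marginal_sum phi j f = \big[Rplus/0]_(A | crit phi j A) f A.
Proof.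
move=> mono; rewrite /marginal_sum big_mkcond [RHS]big_mkcond; apply: eq_bigr => A _.
rewrite /crit; case: (j \notin A) => //=.
by have := mono A (j |: A) (subsetUr _ _); case: (phi A); case: (phi (j |: A)) => //= _; ring.
Qed.

Lemma I_BP_marginal (Om : ProbSpace) n (X : 'I_n -> Om -> R) (phi : {set 'I_n} -> bool)
  (j : 'I_n) :
  (forall (i : 'I_n) (t : R), ps_meas (fun w => X i w <= t)) -> (forall i w, 0 <= X i w) ->
  (forall i k : 'I_n, i <> k -> ps_P (fun w => X i w = X k w) = 0) ->
  semicoherent phi -> I_BP X phi j = marginal_sum phi j (q_prob X j).
Proof.
move=> X_meas X_ge0 no_ties phi_sc.
by rewrite (I_BP_crit_sum X_meas j phi_sc X_ge0 no_ties) marginal_sum_crit //; case: phi_sc.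
Qed.

Lemma subsetC1 (T : finType) (j : T) (A : {set T}) : (A \subset ~: [set j]) = (j \notin A).
Proof. by rewrite subsetC sub1set inE. Qed.

Lemma subsetU1_notin (T : finType) (j : T) (A B : {set T}) :
  j \notin B -> (B \subset j |: A) = (B \subset A).
Proof.
move=> jB; apply/subsetP/subsetP => sub i iB; last by rewrite !inE sub ?orbT.
have := sub i iB; rewrite !inE; case: eqVneq => [ij | //]; by rewrite -ij iB in jB.
Qed.

Lemma not_subset (T : finType) (A B : {set T}) (b : T) :
  b \in A -> b \notin B -> (A \subset B) = false.
Proof. by move=> bA bB; apply/negbTE/negP => /subsetP /(_ b bA); apply/negP. Qed.

Lemma sum_at_top n (j : 'I_n) (f : {set 'I_n} -> R) :
  \big[Rplus/0]_(A : {set 'I_n} | j \notin A) (f A * INR (A == ~: [set j])) = f (~: [set j]).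
Proof.
rewrite (bigD1 (~: [set j])) ?inE ?eqxx //= big1 => [|A /andP [_ /negbTE ->]] /=; ring.
Qed.

Definition series_sf n (A : {set 'I_n}) : bool := A == setT.

Lemma coherent_series n (j : 'I_n) : coherent (@series_sf n).
Proof.
rewrite /series_sf; split; first split.
- by move=> A B AB; apply/implyP; rewrite -!subTset => /subset_trans; apply.
- split; last exact: eqxx.
  by apply/eqP => /setP /(_ j); rewrite !inE.
- move=> i; exists setT; rewrite setUT eqxx.
  by move=> /eqP /setP /(_ i); rewrite !inE eqxx.
Qed.

(* Only the complement of j is critical for j in the series system. *)
Lemma marginal_series n (j : 'I_n) (f : {set 'I_n} -> R) :
  marginal_sum (@series_sf n) j f = f (~: [set j]).
Proof.
rewrite -sum_at_top; apply: eq_bigr => A jA; congr (_ * _).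
have -> : series_sf A = false by apply/negbTE/negP => /eqP A_T; rewrite A_T inE in jA.
suff -> : series_sf (j |: A) = (A == ~: [set j]) by rewrite /= Rminus_0_r.
apply/eqP/eqP => [/setP jA_T | ->]; apply/setP => i.
  by have := jA_T i; rewrite !inE; case: eqVneq => [-> | //]; rewrite (negbTE jA).
by rewrite !inE; case: eqVneq.
Qed.

Definition two_series n (B A : {set 'I_n}) : bool := (B \subset A) || (~: B \subset A).

Lemma coherent_two_series n (B : {set 'I_n}) (b1 b2 : 'I_n) :
  b1 \in B -> b2 \notin B -> coherent (two_series B).
Proof.
move=> b1B b2B; have b2CB : b2 \in ~: B by rewrite inE.
rewrite /two_series; split; first split.
- by move=> A A' AA'; apply/implyP => /orP [] /subset_trans /(_ AA') ->; rewrite ?orbT.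
- split; last by rewrite subsetT.
  by rewrite (not_subset b1B (negbT (in_set0 b1))) (not_subset b2CB (negbT (in_set0 b2))).
- move=> i; have [iB | iB] := boolP (i \in B).
  + exists B; rewrite (setUidPr _) ?sub1set // subxx.
    rewrite (not_subset iB (_ : i \notin B :\ i)) ?(not_subset b2CB (_ : b2 \notin B :\ i)) //.
      by rewrite !inE (negbTE b2B) andbF.
    by rewrite !inE eqxx.
  + have iCB : i \in ~: B by rewrite inE.
    exists (~: B); rewrite (setUidPr _) ?sub1set // subxx orbT.
    rewrite (not_subset b1B (_ : b1 \notin ~: B :\ i)) //.
    rewrite (not_subset iCB (_ : i \notin ~: B :\ i)) //.
      by rewrite !inE eqxx.
    by rewrite !inE b1B andbF.
Qed.

Lemma two_series_jump n (j : 'I_n) (C A : {set 'I_n}) : j \notin C -> j \notin A ->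
  INR (two_series (j |: C) (j |: A)) - INR (two_series (j |: C) A) =
  INR (C \subset A) - INR (A == ~: [set j]).
Proof.
move=> jC jA; have jCC : j \notin ~: (j |: C) by rewrite !inE eqxx.
rewrite /two_series (subsetU1_notin A jCC).
have -> : (j |: C \subset j |: A) = (C \subset A).
  by rewrite subUset sub1set setU11 subsetU1_notin.
have -> : (j |: C \subset A) = false by rewrite (not_subset (setU11 j C)).
have -> : (A == ~: [set j]) = (C \subset A) && (~: (j |: C) \subset A).
  rewrite -subUset; suff -> : C :|: ~: (j |: C) = ~: [set j] by rewrite eqEsubset subsetC1 jA.
  apply/setP => i; rewrite !inE.
  by case: eqVneq => [-> | _]; [rewrite (negbTE jC) | case: (i \in C)].
by case: (C \subset A); case: (~: (j |: C) \subset A) => /=; ring.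
Qed.

Lemma marginal_two_series n (j : 'I_n) (C : {set 'I_n}) (f : {set 'I_n} -> R) : j \notin C ->
  marginal_sum (two_series (j |: C)) j f =
  \big[Rplus/0]_(A : {set 'I_n} | (C \subset A) && (A \subset ~: [set j])) f A - f (~: [set j]).
Proof.
move=> jC; rewrite /marginal_sum.
rewrite (eq_bigr (fun A => f A * INR (C \subset A) - f A * INR (A == ~: [set j]))) => [|A jA].
  rewrite big_Rminus sum_at_top; congr (_ - _).
  rewrite big_mkcond [RHS]big_mkcond; apply: eq_bigr => A _; rewrite subsetC1.
  by case: (j \notin A); case: (C \subset A) => /=; ring.
by rewrite two_series_jump //; ring.
Qed.

Lemma interval_sums_inj (T : finType) (D : {set T}) (f g : {set T} -> R) :
  (forall C : {set T}, C \subset D ->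
     \big[Rplus/0]_(A : {set T} | (C \subset A) && (A \subset D)) f A =
     \big[Rplus/0]_(A : {set T} | (C \subset A) && (A \subset D)) g A) ->
  forall C : {set T}, C \subset D -> f C = g C.
Proof.
move=> sums_eq C; have [k] := ubnP (#|D| - #|C|); elim: k C => // k IH C codim_C sCD.
have := sums_eq C sCD; rewrite (bigD1 C) ?subxx ?sCD //= [RHS](bigD1 C) ?subxx ?sCD //=.
rewrite (eq_bigr g) => [|A /andP [/andP [sCA sAD] AC]]; first exact: Rplus_eq_reg_r.
have ltCA : (#|C| < #|A|)%nat by apply: proper_card; rewrite properEneq eq_sym AC.
have leAD := subset_leq_card sAD; rewrite ltnS in codim_C.
exact: IH (leq_trans (ltn_sub2l (leq_trans ltCA leAD) ltCA) codim_C) sAD.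
Qed.

Lemma BP_of_q (Om : ProbSpace) n (X : 'I_n -> Om -> R) :
  (forall (i : 'I_n) (t : R), ps_meas (fun w => X i w <= t)) -> (forall i w, 0 <= X i w) ->
  (forall i k : 'I_n, i <> k -> ps_P (fun w => X i w = X k w) = 0) ->
  (forall (j : 'I_n) (A : {set 'I_n}), j \notin A -> q_prob X j A = sweight A) ->
  forall phi, semicoherent phi -> forall j, I_BP X phi j = shapley phi j.
Proof.
move=> X_meas X_ge0 no_ties q_eq phi phi_sc j; rewrite I_BP_marginal //.
by apply: eq_bigr => A jA; rewrite q_eq.
Qed.

(* (a) => (c): testing the series system and the two-series systems on j |: C recovers
   every interval sum of q_j, hence q_j itself. *)
Lemma q_of_BP (Om : ProbSpace) n (X : 'I_n -> Om -> R) :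
  (forall (i : 'I_n) (t : R), ps_meas (fun w => X i w <= t)) -> (forall i w, 0 <= X i w) ->
  (forall i k : 'I_n, i <> k -> ps_P (fun w => X i w = X k w) = 0) ->
  (forall phi, coherent phi -> forall j, I_BP X phi j = shapley phi j) ->
  forall (j : 'I_n) (A : {set 'I_n}), j \notin A -> q_prob X j A = sweight A.
Proof.
move=> X_meas X_ge0 no_ties BP_eq j A jA.
have marg_eq phi :
    coherent phi -> marginal_sum phi j (q_prob X j) = marginal_sum phi j (@sweight n).
  by move=> phi_coh; rewrite -I_BP_marginal //; [exact: BP_eq | case: phi_coh].
have top_eq := marg_eq _ (coherent_series j); rewrite !marginal_series in top_eq.
apply: (interval_sums_inj (D := ~: [set j])); last by rewrite subsetC1.
move=> C sCD; have [-> | neCD] := eqVneq C (~: [set j]).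
  by rewrite !(big_pred1 (~: [set j])) // => B; rewrite /= eqEsubset andbC.
have /properP [_ [b bD bC]] : C \proper ~: [set j] by rewrite properEneq neCD.
have jC : j \notin C by rewrite -subsetC1.
have b_jC : b \notin j |: C by rewrite !inE in bD *; rewrite negb_or bD.
have := marg_eq _ (coherent_two_series (setU11 j C) b_jC).
by rewrite !marginal_two_series // top_eq => /Rplus_eq_reg_r.
Qed.

Local Close Scope R_scope.

Theorem proposition9 (Om : ProbSpace) (n : nat) (X : 'I_n -> Om -> R)
  (Hn : (1 <= n)%N)
  (Hmeas : forall (i : 'I_n) (t : R), @ps_meas Om (fun w => (X i w <= t)%R))
  (Hnonneg : forall (i : 'I_n) (w : Om), (0 <= X i w)%R)
  (Hnoties : forall i k : 'I_n, i <> k -> @ps_P Om (fun w => X i w = X k w) = 0%R) :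
  [<-> (forall phi : {set 'I_n} -> bool, coherent phi ->
          forall j : 'I_n, I_BP X phi j = shapley phi j);
       (forall phi : {set 'I_n} -> bool, semicoherent phi ->
          forall j : 'I_n, I_BP X phi j = shapley phi j);
       (forall (j : 'I_n) (A : {set 'I_n}), j \notin A ->
          q_prob X j A = sweight A)].
Proof.
have BP_q := BP_of_q Hmeas Hnonneg Hnoties.
have q_BP := q_of_BP Hmeas Hnonneg Hnoties.
tfae.
- by move=> BP_coh; apply/BP_q/q_BP.
- by move=> BP_semi; apply: q_BP => phi /proj1; exact: BP_semi.
- by move=> q_eq phi /proj1; exact: BP_q.
Qed.
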